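(* Suppose $\tau_f\in(\tau_2^i,\tau_c)$. Then $$p'(\tau)<\frac{2h(\tau)-2h(\tau_f)}{\tau^2-\tau_f^2}<p'(\tau_f)\quad\text{for }\tau\in\big(1,\tau_{pr}(\tau_{po}(\tau_f))\big).$$ Moreover, for any $\tau_b\in(1,\tau_{pr}(\tau_{po}(\tau_f)))$, Liu's extended entropy condition $\frac{2h(\tau_f)-2h(\tau_b)}{\tau_f^2-\tau_b^2}<\frac{2h(\tau_f)-2h(\tau)}{\tau_f^2-\tau^2}$ for all $\tau\in(\tau_b,\tau_f)$ holds.
   Context: The pressure is $p(\tau)=\frac{\mathcal S}{(\tau-1)^\gamma}-\frac{1}{\tau^2}$ for $\tau>1$, with constants $1<\gamma<2$, $\mathcal S>0$, assumed such that there exist $1<\tau_1^i<\tau_2^i$ with $p'<0$ on $(1,\infty)$, $p''>0$ on $(1,\tau_1^i)\cup(\tau_2^i,\infty)$, $p''<0$ on $(\tau_1^i,\tau_2^i)$. The function $h$ satisfies $h'(\tau)=\tau p'(\tau)$. $\tau_c$ is the unique $\tau_c\in(\tau_1^i,\infty)$ with $p'(\tau_1^i)=\frac{2h(\tau_c)-2h(\tau_1^i)}{\tau_c^2-(\tau_1^i)^2}$. For $\tau_f\in(\tau_2^i,\tau_c)$, $\tau_{po}(\tau_f)$ is the unique $\tau\in(\tau_1^i,\tau_2^i)$ with $p'(\tau)=\frac{2h(\tau)-2h(\tau_f)}{\tau^2-\tau_f^2}$. For $\sigma\in(\tau_1^i,\tau_2^i)$, $\tau_{pr}(\sigma)$ is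 the unique $\tau\in(1,\sigma)$ with $\frac{2h(\tau)-2h(\sigma)}{\tau^2-\sigma^2}=p'(\sigma)$. *)

From Stdlib Require Import Reals.
From Coquelicot Require Import Coquelicot.
Open Scope R_scope.

Definition pres (S gamma : R) (tau : R) : R :=
  S / Rpower (tau - 1) gamma - 1 / tau ^ 2.

Definition dpres (S gamma : R) (tau : R) : R := Derive (pres S gamma) tau.
Definition d2pres (S gamma : R) (tau : R) : R := Derive_n (pres S gamma) 2 tau.

Definition chord (h : R -> R) (a b : R) : R :=
  (2 * h a - 2 * h b) / (a ^ 2 - b ^ 2).

(* Write H(u) = 2 h(sqrt u); then H'(u) = p'(sqrt u), so [chord h] is the
   slope of H between two values of u = tau^2, and comparing a chord with a
   slope m amounts to comparing values of the tilted potential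
   2 h(tau) - m tau^2, whose derivative 2 tau (p'(tau) - m) changes sign where
   p' crosses m.  For m = p'(tau_po) the line of slope m tangent to H at
   tau_po meets the graph again at tau_pr and tau_f; since p' increases,
   decreases, then increases, the potential decreases, increases, decreases
   and increases, so it lies above its common value at tau_pr, tau_po, tau_f
   on (1, tau_pr) and below it on [tau_pr, tau_f].  Both claims are read off
   this picture, together with the convexity of H where p' increases. *)
From Stdlib Require Import Reals Lra Psatz.
From Coquelicot Require Import Coquelicot.
Open Scope R_scope.

Lemma mvt_is_derive (f df : R -> R) (a b : R) : a < b ->
  (forall x, a <= x <= b -> is_derive f x (df x)) ->
  exists c, a < c < b /\ f b - f a = df c * (b - a).
Proof.
intros Hab Hd.
destruct (MVT_cor2 f df a b Hab) as [c [Hc Ec]].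
- intros c Hc. apply is_derive_Reals, Hd, Hc.
- exists c. split; assumption.
Qed.

Lemma incr_of_derive_pos (f df : R -> R) (a b : R) :
  (forall x, a <= x <= b -> is_derive f x (df x)) ->
  (forall x, a < x < b -> 0 < df x) ->
  forall x y, a <= x -> x < y -> y <= b -> f x < f y.
Proof.
intros Hd Hpos x y Hx Hxy Hy.
destruct (mvt_is_derive f df x y Hxy) as [c [Hc Ec]].
- intros z Hz. apply Hd. lra.
- assert (0 < df c) by (apply Hpos; lra). nra.
Qed.

Lemma decr_of_derive_neg (f df : R -> R) (a b : R) :
  (forall x, a <= x <= b -> is_derive f x (df x)) ->
  (forall x, a < x < b -> df x < 0) ->
  forall x y, a <= x -> x < y -> y <= b -> f y < f x.
Proof.
intros Hd Hneg x y Hx Hxy Hy.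
enough (- f x < - f y) by lra.
apply (incr_of_derive_pos (fun z => - f z) (fun z => - df z) a b); auto.
- intros z Hz. apply (is_derive_opp f), Hd, Hz.
- intros z Hz. specialize (Hneg z Hz). lra.
Qed.

Definition tilt (h : R -> R) (m x : R) : R := 2 * h x - m * x ^ 2.

Lemma chordC (h : R -> R) (a b : R) : chord h a b = chord h b a.
Proof.
unfold chord, Rdiv.
replace (2 * h a - 2 * h b) with (- (2 * h b - 2 * h a)) by ring.
replace (a ^ 2 - b ^ 2) with (- (b ^ 2 - a ^ 2)) by ring.
rewrite Rinv_opp. ring.
Qed.

Lemma tilt_shift (h : R -> R) (m m' x : R) :
  tilt h m' x = tilt h m x + (m - m') * x ^ 2.
Proof. unfold tilt. ring. Qed.

Lemma chord_sub_mul (h : R -> R) (m a b : R) : 0 < a < b ->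
  (chord h a b - m) * (b ^ 2 - a ^ 2) = tilt h m b - tilt h m a.
Proof.
intros Hab. unfold chord, tilt. field. nra.
Qed.

Lemma chord_lt_iff (h : R -> R) (m a b : R) : 0 < a < b ->
  chord h a b < m <-> tilt h m b < tilt h m a.
Proof.
intros Hab. pose proof (chord_sub_mul h m a b Hab).
assert (0 < b ^ 2 - a ^ 2) by nra.
split; intros; nra.
Qed.

Lemma chord_gt_iff (h : R -> R) (m a b : R) : 0 < a < b ->
  m < chord h a b <-> tilt h m a < tilt h m b.
Proof.
intros Hab. pose proof (chord_sub_mul h m a b Hab).
assert (0 < b ^ 2 - a ^ 2) by nra.
split; intros; nra.
Qed.

Lemma tilt_eq_of_chord (h : R -> R) (m a b : R) : 0 < a < b ->
  chord h a b = m -> tilt h m a = tilt h m b.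
Proof.
intros Hab E. pose proof (chord_sub_mul h m a b Hab) as Hmul.
rewrite E, Rminus_diag, Rmult_0_l in Hmul. lra.
Qed.

Section TiltedPotential.

Variables P h : R -> R.
Hypothesis h_derive : forall x, 1 < x -> is_derive h x (x * P x).

Lemma is_derive_tilt m x : 1 < x -> is_derive (tilt h m) x (2 * x * (P x - m)).
Proof.
intros Hx. unfold tilt.
assert (Hsq : is_derive (fun y => m * y ^ 2) x (m * (2 * x)))
  by (auto_derive; [exact I | ring]).
replace (2 * x * (P x - m)) with (2 * (x * P x) - m * (2 * x)) by ring.
apply (is_derive_minus (fun y => 2 * h y)); [| exact Hsq].
apply is_derive_scal, h_derive, Hx.
Qed.

Lemma tilt_mvt m a b : 1 < a < b ->
  exists c, a < c < b /\ tilt h m b - tilt h m a = 2 * c * (P c - m) * (b - a).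
Proof.
intros Hab. apply mvt_is_derive; [lra |].
intros x Hx. apply is_derive_tilt. lra.
Qed.

Lemma chord_mvt a b : 1 < a < b -> exists c, a < c < b /\ P c = chord h a b.
Proof.
intros Hab.
destruct (tilt_mvt (chord h a b) a b Hab) as [c [Hc Ec]].
exists c. split; [exact Hc |].
rewrite <- (tilt_eq_of_chord h (chord h a b) a b) in Ec by (auto; lra).
assert (0 < 2 * c * (b - a)) by nra.
nra.
Qed.

Lemma tilt_incr m a b : 1 < a -> (forall x, a < x < b -> m < P x) ->
  forall x y, a <= x -> x < y -> y <= b -> tilt h m x < tilt h m y.
Proof.
intros Ha HP.
apply (incr_of_derive_pos _ (fun x => 2 * x * (P x - m)) a b).
- intros x Hx. apply is_derive_tilt. lra.
- intros x Hx. specialize (HP x Hx). nra.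
Qed.

Lemma tilt_decr m a b : 1 < a -> (forall x, a < x < b -> P x < m) ->
  forall x y, a <= x -> x < y -> y <= b -> tilt h m y < tilt h m x.
Proof.
intros Ha HP.
apply (decr_of_derive_neg _ (fun x => 2 * x * (P x - m)) a b).
- intros x Hx. apply is_derive_tilt. lra.
- intros x Hx. specialize (HP x Hx). nra.
Qed.

(* Where P increases, H is strictly convex, so the tilted potential is
   strictly quasi-convex. *)
Lemma tilt_lt_max m a x b : 1 < a -> a < x < b ->
  (forall u v, a < u -> u < v -> v < b -> P u < P v) ->
  tilt h m x < Rmax (tilt h m a) (tilt h m b).
Proof.
intros Ha Hx HP.
apply Rnot_le_lt. intros Hmax.
pose proof (Rmax_l (tilt h m a) (tilt h m b)).
pose proof (Rmax_r (tilt h m a) (tilt h m b)).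
destruct (tilt_mvt m a x) as [c1 [Hc1 E1]]; [lra |].
destruct (tilt_mvt m x b) as [c2 [Hc2 E2]]; [lra |].
assert (m <= P c1).
{ assert (0 < 2 * c1 * (x - a)) by nra. nra. }
assert (P c2 <= m).
{ assert (0 < 2 * c2 * (b - x)) by nra. nra. }
assert (P c1 < P c2) by (apply HP; lra).
lra.
Qed.

End TiltedPotential.

Section TangentChord.

Variables (P h : R -> R) (t1 t2 : R).
Hypothesis h_derive : forall x, 1 < x -> is_derive h x (x * P x).
Hypothesis P_incr_left : forall x y, 1 < x -> x < y -> y <= t1 -> P x < P y.
Hypothesis P_decr_mid : forall x y, t1 <= x -> x < y -> y <= t2 -> P y < P x.
Hypothesis P_incr_right : forall x y, t2 <= x -> x < y -> P x < P y.

Variables tf tpo tpr : R.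
Hypothesis tpo_between : t1 < tpo < t2.
Hypothesis t2_lt_tf : t2 < tf.
Hypothesis tpr_between : 1 < tpr < tpo.
Hypothesis chord_tpo_tf : P tpo = chord h tpo tf.
Hypothesis chord_tpr_tpo : chord h tpr tpo = P tpo.

Let m := P tpo.

Lemma tilt_tpr_tpo : tilt h m tpr = tilt h m tpo.
Proof. apply tilt_eq_of_chord; [lra | exact chord_tpr_tpo]. Qed.

Lemma tilt_tpo_tf : tilt h m tpo = tilt h m tf.
Proof. apply tilt_eq_of_chord; [lra | symmetry; exact chord_tpo_tf]. Qed.

Lemma crossing_left : exists xi, tpr < xi < t1 /\ P xi = m.
Proof.
destruct (chord_mvt P h h_derive tpr tpo) as [xi [Hxi E]]; [lra |].
exists xi. rewrite chord_tpr_tpo in E.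
split; [| exact E]. split; [lra |].
apply Rnot_le_lt. intros Hle.
assert (P tpo < P xi) by (apply P_decr_mid; lra).
unfold m in E. lra.
Qed.

Lemma crossing_right : exists ze, t2 < ze < tf /\ P ze = m.
Proof.
destruct (chord_mvt P h h_derive tpo tf) as [ze [Hze E]]; [lra |].
exists ze. rewrite <- chord_tpo_tf in E.
split; [| exact E]. split; [| lra].
apply Rnot_le_lt. intros Hle.
assert (P ze < P tpo) by (apply P_decr_mid; lra).
unfold m in E. lra.
Qed.

Lemma tpr_lt_t1 : tpr < t1.
Proof. destruct crossing_left as [xi [Hxi _]]. lra. Qed.

Lemma P_lt_m_left x : 1 < x < tpr -> P x < m.
Proof.
intros Hx. destruct crossing_left as [xi [Hxi E]].
rewrite <- E. apply P_incr_left; lra.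
Qed.

Lemma m_lt_P_tf : m < P tf.
Proof.
destruct crossing_right as [ze [Hze E]].
rewrite <- E. apply P_incr_right; lra.
Qed.

Lemma tilt_tf_lt_left x : 1 < x < tpr -> tilt h m tf < tilt h m x.
Proof.
intros Hx. rewrite <- tilt_tpo_tf, <- tilt_tpr_tpo.
apply (tilt_decr P h h_derive m x tpr); try lra.
intros y Hy. apply P_lt_m_left. lra.
Qed.

Lemma tilt_le_tf_between x : tpr <= x <= tf -> tilt h m x <= tilt h m tf.
Proof.
intros Hx.
destruct crossing_left as [xi [Hxi Exi]].
destruct crossing_right as [ze [Hze Eze]].
assert (P_lt_before : forall y, tpr < y < xi -> P y < m)
  by (intros y Hy; rewrite <- Exi; apply P_incr_left; lra).
assert (P_gt_after_xi : forall y, xi < y < tpo -> m < P y).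
{ intros y Hy. destruct (Rle_lt_dec y t1).
  - rewrite <- Exi. apply P_incr_left; lra.
  - apply P_decr_mid; lra. }
assert (P_lt_after_tpo : forall y, tpo < y < ze -> P y < m).
{ intros y Hy. destruct (Rle_lt_dec y t2).
  - apply P_decr_mid; lra.
  - rewrite <- Eze. apply P_incr_right; lra. }
assert (P_gt_after_ze : forall y, ze < y < tf -> m < P y)
  by (intros y Hy; rewrite <- Eze; apply P_incr_right; lra).
rewrite <- tilt_tpo_tf.
destruct (Rle_lt_dec x xi) as [Hx1 | Hx1].
{ rewrite <- tilt_tpr_tpo.
  destruct (Rle_lt_or_eq_dec tpr x) as [Hlt | ->]; [lra | | lra].
  apply Rlt_le, (tilt_decr P h h_derive m tpr xi); try lra. exact P_lt_before. }
destruct (Rle_lt_dec x tpo) as [Hx2 | Hx2].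
{ destruct (Rle_lt_or_eq_dec x tpo) as [Hlt | ->]; [lra | | lra].
  apply Rlt_le, (tilt_incr P h h_derive m xi tpo); try lra. exact P_gt_after_xi. }
destruct (Rle_lt_dec x ze) as [Hx3 | Hx3].
{ apply Rlt_le, (tilt_decr P h h_derive m tpo ze); try lra. exact P_lt_after_tpo. }
rewrite tilt_tpo_tf.
destruct (Rle_lt_or_eq_dec x tf) as [Hlt | ->]; [lra | | lra].
apply Rlt_le, (tilt_incr P h h_derive m ze tf); try lra. exact P_gt_after_ze.
Qed.

Lemma chord_tf_lt_m t : 1 < t < tpr -> chord h t tf < m.
Proof.
intros Ht. apply chord_lt_iff; [lra |]. apply tilt_tf_lt_left, Ht.
Qed.

Lemma P_lt_chord_tf t : 1 < t < tpr -> P t < chord h t tf.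
Proof.
intros Ht. apply chord_gt_iff; [lra |].
assert (Hm := P_lt_m_left t Ht).
assert (tilt h (P t) t < tilt h (P t) tpr).
{ apply (tilt_incr P h h_derive (P t) t tpr); try lra.
  intros y Hy. apply P_incr_left; pose proof tpr_lt_t1; lra. }
assert (tilt h (P t) tpr < tilt h (P t) tf).
{ rewrite (tilt_shift h m (P t) tpr), (tilt_shift h m (P t) tf).
  rewrite tilt_tpr_tpo, tilt_tpo_tf.
  assert (tpr ^ 2 < tf ^ 2) by nra. nra. }
lra.
Qed.

Lemma liu_entropy tb : 1 < tb < tpr ->
  forall t, tb < t < tf -> chord h tf tb < chord h tf t.
Proof.
intros Htb t Ht.
rewrite (chordC h tf tb), (chordC h tf t).
set (s := chord h tb tf).
assert (Hs : s < m) by (apply chord_tf_lt_m, Htb).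
assert (Etb : tilt h s tb = tilt h s tf) by (apply tilt_eq_of_chord; [lra | reflexivity]).
assert (right_part : forall x, tpr <= x < tf -> tilt h s x < tilt h s tf).
{ intros x Hx. rewrite (tilt_shift h m s x), (tilt_shift h m s tf).
  pose proof (tilt_le_tf_between x ltac:(lra)).
  assert (x ^ 2 < tf ^ 2) by nra. nra. }
apply chord_gt_iff; [lra |].
destruct (Rlt_or_le t tpr) as [Hlt | Hle]; [| apply right_part; lra].
assert (Hmax : tilt h s t < Rmax (tilt h s tb) (tilt h s tpr)).
{ apply (tilt_lt_max P); try lra; [exact h_derive |].
  intros u v Hu Huv Hv. apply P_incr_left; pose proof tpr_lt_t1; lra. }
rewrite Rmax_left in Hmax; [lra |].
rewrite Etb. apply Rlt_le, right_part. lra.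
Qed.

Lemma tangent_chord_bounds :
  (forall t, 1 < t < tpr -> P t < chord h t tf /\ chord h t tf < P tf) /\
  (forall tb, 1 < tb < tpr -> forall t, tb < t < tf -> chord h tf tb < chord h tf t).
Proof.
split.
- intros t Ht. split; [apply P_lt_chord_tf, Ht |].
  apply (Rlt_trans _ m); [apply chord_tf_lt_m, Ht | exact m_lt_P_tf].
- exact liu_entropy.
Qed.

End TangentChord.

Definition dpres_expr (S g x : R) : R :=
  - S * g / ((x - 1) * exp (g * ln (x - 1))) + 2 / x ^ 3.

Lemma is_derive_pres S g x : 1 < x -> is_derive (pres S g) x (dpres_expr S g x).
Proof.
intros Hx. unfold pres, Rpower, dpres_expr. auto_derive.
- repeat split; try lra; try (apply Rgt_not_eq, exp_pos); nra.
- assert (exp (g * ln (x + - (1))) > 0) by apply exp_pos.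
  replace (x + - (1)) with (x - 1) in * by ring.
  set (E := exp _) in *. field. repeat split; lra.
Qed.

Lemma is_derive_dpres S g x : 1 < x -> is_derive (dpres S g) x (d2pres S g x).
Proof.
intros Hx. apply Derive_correct.
apply (ex_derive_ext_loc (dpres_expr S g)).
- assert (Hp : 0 < x - 1) by lra.
  exists (mkposreal _ Hp). intros y Hy.
  change (Rabs (y - x) < x - 1) in Hy. apply Rabs_lt_between in Hy.
  unfold dpres. symmetry. apply is_derive_unique, is_derive_pres. lra.
- unfold dpres_expr. auto_derive.
  repeat split; try lra; try (apply Rgt_not_eq, exp_pos).
  + apply Rmult_integral_contrapositive_currified; [lra | apply Rgt_not_eq, exp_pos].
  + nra.
Qed.

Lemma dpres_incr S g a b : 1 < a -> (forall x, a < x < b -> 0 < d2pres S g x) ->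
  forall x y, a <= x -> x < y -> y <= b -> dpres S g x < dpres S g y.
Proof.
intros Ha. apply incr_of_derive_pos.
intros x Hx. apply is_derive_dpres. lra.
Qed.

Lemma dpres_decr S g a b : 1 < a -> (forall x, a < x < b -> d2pres S g x < 0) ->
  forall x y, a <= x -> x < y -> y <= b -> dpres S g y < dpres S g x.
Proof.
intros Ha. apply decr_of_derive_neg.
intros x Hx. apply is_derive_dpres. lra.
Qed.

Theorem proposition3p6 (S gamma t1 t2 tc : R) (h : R -> R) :
  1 < gamma < 2 -> 0 < S ->
  1 < t1 < t2 ->
  (forall t, 1 < t -> dpres S gamma t < 0) ->
  (forall t, (1 < t < t1 \/ t2 < t) -> 0 < d2pres S gamma t) ->
  (forall t, t1 < t < t2 -> d2pres S gamma t < 0) ->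
  (forall t, 1 < t -> is_derive h t (t * dpres S gamma t)) ->
  (* tau_c *)
  t1 < tc -> dpres S gamma t1 = chord h tc t1 ->
  (forall t, t1 < t -> dpres S gamma t1 = chord h t t1 -> t = tc) ->
  forall tf, t2 < tf < tc ->
  (* tpo = tau_po(tau_f) *)
  forall tpo, t1 < tpo < t2 -> dpres S gamma tpo = chord h tpo tf ->
  (forall t, t1 < t < t2 -> dpres S gamma t = chord h t tf -> t = tpo) ->
  (* tpr = tau_pr(tau_po(tau_f)) *)
  forall tpr, 1 < tpr < tpo -> chord h tpr tpo = dpres S gamma tpo ->
  (forall t, 1 < t < tpo -> chord h t tpo = dpres S gamma tpo -> t = tpr) ->
  (forall t, 1 < t < tpr ->
     dpres S gamma t < chord h t tf /\ chord h t tf < dpres S gamma tf) /\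
  (forall tb, 1 < tb < tpr ->
     forall t, tb < t < tf -> chord h tf tb < chord h tf t).
Proof.
intros _ _ Ht12 _ Hconvex Hconcave Hh _ _ _ tf Htf tpo Htpo Epo _ tpr Htpr Epr _.
assert (incr_left : forall x y, 1 < x -> x < y -> y <= t1 ->
          dpres S gamma x < dpres S gamma y).
{ intros x y Hx Hxy Hy. apply (dpres_incr S gamma x t1); try lra.
  intros z Hz. apply Hconvex. lra. }
assert (decr_mid : forall x y, t1 <= x -> x < y -> y <= t2 ->
          dpres S gamma y < dpres S gamma x).
{ intros x y Hx Hxy Hy. apply (dpres_decr S gamma t1 t2); try lra. exact Hconcave. }
assert (incr_right : forall x y, t2 <= x -> x < y -> dpres S gamma x < dpres S gamma y).
{ intros x y Hx Hxy. apply (dpres_incr S gamma t2 y); try lra.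
  intros z Hz. apply Hconvex. lra. }
exact (tangent_chord_bounds (dpres S gamma) h t1 t2 Hh incr_left decr_mid incr_right
         tf tpo tpr Htpo ltac:(lra) Htpr Epo Epr).
Qed.
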